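(* Let $n\ge 2$, $d\ge n+1$, and let $f$ be a Perazzo form of degree $d$ in $S$ with $A_f$ having $h$-vector $(h_0,\dots,h_d)$. If $A_f$ has the weak Lefschetz property, then $\#\{i\mid h_i=d+2\}\le 1$.
   Context: $K$ is an algebraically closed field of characteristic zero. $S=K[x_0,\dots,x_n,u,v]$ and $R=K[y_0,\dots,y_n,U,V]$ acts on $S$ by differentiation ($y_i=\partial/\partial x_i$, $U=\partial/\partial u$, $V=\partial/\partial v$); write $\theta\circ f$ for this action. A Perazzo form of degree $d$ is $f=x_0p_0+x_1p_1+\cdots+x_np_n+g$ where $p_0,\dots,p_n\in K[u,v]_{d-1}$ are linearly independent but algebraically dependent forms and $g\in K[u,v]_d$. $\operatorname{Ann}_R(f)=\{\theta\in R:\theta\circ f=0\}$ and $A_f=R/\operatorname{Ann}_R(f)$ is a graded artinian Gorenstein algebra of socle degree $d$; its $h$-vector is $h_i=\dim_K [A_f]_i$, and satisfies $h_i=h_{d-i}$. A graded artinian algebra $A$ has the weak Lefschetz property (WLP) if there is $\ell\in[A]_1$ such that multiplication $\times\ell:[A]_i\to[A]_{i+1}$ has maximal rank (is injective or surjective) for every $i\ge 0$. *)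

From HB Require Import structures.
From mathcomp Require Import all_boot all_order all_algebra.
From mathcomp Require Import mpoly.
Set Implicit Arguments. Unset Strict Implicit. Unset Printing Implicit Defensive.
Import GRing.Theory.
Local Open Scope ring_scope.

(* Both S = K[x_0..x_n,u,v] and R = K[y_0..y_n,U,V] are modelled as
   {mpoly K[n.+3]}: variable index j <= n is x_j (resp. y_j),
   index n+1 is u (resp. U), index n+2 is v (resp. V). *)

Section Perazzo.
Variables (K : fieldType) (n : nat).
Notation P := {mpoly K[n.+3]}.

(* theta o f : action of R on S by differentiation
   (y^m acts as the iterated partial derivative d^m). *)
Definition act (theta f : P) : P :=
  \sum_(m <- msupp theta) theta@_m *: mderivm m f.

Definition annih (f theta : P) : Prop := act theta f = 0.

Definition in_Kuv (p : P) : Prop :=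
  forall m, m \in msupp p -> forall j : 'I_n.+3, (j <= n)%N -> m j = 0%N.

Definition perazzo_form (d : nat) (f : P) : Prop :=
  exists (p : 'I_n.+1 -> P) (g : P),
    [/\ forall i, in_Kuv (p i) /\ p i \is d.-1.-homog,
        in_Kuv g /\ g \is d.-homog,
        (forall c : 'I_n.+1 -> K, \sum_i c i *: p i = 0 -> forall i, c i = 0),
        (exists F : {mpoly K[n.+1]}, F != 0 /\ F \mPo [tuple p i | i < n.+1] = 0)
      & f = \sum_(i < n.+1) 'X_(inord i) * p i + g].

(* dim_K [A_f]_i = k, where [A_f]_i = R_i / Ann_R(f)_i:
   there are k forms of degree i whose classes form a basis of the quotient. *)
Definition hdim (f : P) (i k : nat) : Prop :=
  exists b : 'I_k -> P,
    [/\ forall j, b j \is i.-homog,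
        (forall c : 'I_k -> K, annih f (\sum_j c j *: b j) -> forall j, c j = 0)
      & forall theta, theta \is i.-homog ->
          exists c : 'I_k -> K, annih f (theta - \sum_j c j *: b j)].

Definition mul_inj (f l : P) (i : nat) : Prop :=
  forall theta, theta \is i.-homog -> annih f (l * theta) -> annih f theta.

Definition mul_surj (f l : P) (i : nat) : Prop :=
  forall eta, eta \is i.+1.-homog ->
    exists theta, theta \is i.-homog /\ annih f (eta - l * theta).

Definition has_WLP (f : P) : Prop :=
  exists l : P, l \is 1.-homog /\
    forall i : nat, mul_inj f l i \/ mul_surj f l i.

End Perazzo.

From HB Require Import structures.
From mathcomp Require Import all_boot all_order all_algebra.
From mathcomp Require Import mpoly ssrcomplements.
From mathcomp Require Import zify.
Set Implicit Arguments. Unset Strict Implicit. Unset Printing Implicit Defensive.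
Import GRing.Theory.
Local Open Scope ring_scope.

(* Write theta in R_i as theta_x + theta_uv, where theta_uv is its K[U,V]-part.
   As f is linear in the x's, theta_x o f lies in K[u,v]_(d-i), while
   theta_uv o f = theta_uv o g + sum_k x_k (theta_uv o p_k).
   Suppose h_i = h_j = d + 2 with i < j; then j <= d.  If multiplication by l
   is injective in degree i, then theta |-> (l o theta_x o f, theta_uv) is
   injective on [A_f]_i, with values in K[u,v]_(d-i-1) x K[U,V]_i, of
   dimension d + 1.  Otherwise it is surjective in degree i: choosing a zero
   (u0, v0) of the K[U,V]-part of l and a monomial eta of degree i + 1 that
   does not vanish there, eta = l theta mod Ann(f) yields a nonzero
   phi = eta - l_uv theta_uv in K[U,V]_(i+1) killing every p_k, hence (times a
   power of U) one in degree j.  Then phi o f = phi o g lies in K[u,v]_(d-j),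
   and exchanging phi for a monomial of K[U,V]_j puts [A_f]_j o f inside a
   space of dimension (d - j + 1) + j = d + 1. *)

Section LinearAlgebra.
Variables (K : fieldType) (V : lmodType K).

Lemma sum_comb_mulmx k N (c : 'rV[K]_k) (h : 'I_k -> 'I_N -> K) (w : 'I_N -> V) :
  \sum_j c 0 j *: \sum_r h j r *: w r = \sum_r (c *m \matrix_(j, r) h j r) 0 r *: w r.
Proof.
under eq_bigr => j _ do rewrite scaler_sumr.
rewrite exchange_big; apply: eq_bigr => r _; rewrite !mxE scaler_suml.
by apply: eq_bigr => j _; rewrite mxE scalerA.
Qed.

Lemma free_span2_leq k N1 N2 (b : 'I_k -> V) (w1 : 'I_N1 -> V) (w2 : 'I_N2 -> V) :
  (forall c : 'I_k -> K, \sum_j c j *: b j = 0 -> forall j, c j = 0) ->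
  (forall j, exists e1 : 'I_N1 -> K, exists e2 : 'I_N2 -> K,
     b j = \sum_r e1 r *: w1 r + \sum_r e2 r *: w2 r) ->
  (k <= N1 + N2)%N.
Proof.
move=> free span.
have /fin_all_exists [e hb] : forall j, exists e : ('I_N1 -> K) * ('I_N2 -> K),
    b j = \sum_r e.1 r *: w1 r + \sum_r e.2 r *: w2 r.
  by move=> j; have [e1 [e2 ->]] := span j; exists (e1, e2).
pose E1 := \matrix_(j, r) (e j).1 r; pose E2 := \matrix_(j, r) (e j).2 r.
suff /eqP <- : row_free (row_mx E1 E2) by apply: rank_leq_col.
apply: inj_row_free => c; rewrite mul_mx_row => /eqP.
rewrite row_mx_eq0 => /andP[/eqP c1 /eqP c2]; apply/rowP => j; rewrite mxE.
apply: free j; under eq_bigr => j _ do rewrite hb scalerDr.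
rewrite big_split /= !sum_comb_mulmx -/E1 -/E2 c1 c2.
by rewrite !big1 ?addr0 // => r _; rewrite mxE scale0r.
Qed.

Lemma span_exchange N (w : 'I_N.+1 -> V) (x y : 'I_N.+1 -> K) a0 : x a0 != 0 ->
  exists c, exists e : 'I_N -> K,
    \sum_a y a *: w a = c *: \sum_a x a *: w a + \sum_r e r *: w (lift a0 r).
Proof.
move=> x_nz; pose c := y a0 / x a0.
exists c, (fun r => y (lift a0 r) - c * x (lift a0 r)).
rewrite !(bigD1_ord a0) //= scalerDr scaler_sumr -addrA -big_split /= scalerA divfK //.
by congr (_ + _); apply: eq_bigr => r _; rewrite scalerA -scalerDl addrC subrK.
Qed.

Lemma linear_form_root (al be : K) :
  exists u0 v0, be * v0 + al * u0 = 0 /\ (u0 != 0) || (v0 != 0).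
Proof.
have [-> | al_nz] := eqVneq al 0.
  by exists 1, 0; rewrite !mulr0 mul0r addr0 oner_neq0.
by exists (- be), al; rewrite mulrN mulrC subrr al_nz orbT.
Qed.

Lemma sum_scale_pair (V1 V2 : lmodType K) N (e : 'I_N -> K) (x : 'I_N -> V1)
    (y : 'I_N -> V2) :
  \sum_r e r *: (x r, y r) = (\sum_r e r *: x r, \sum_r e r *: y r).
Proof. by elim/big_rec3: _ => // r y1 y2 y3 _ ->. Qed.

End LinearAlgebra.

Section ActLinear.
Variables (K : fieldType) (n : nat).
Notation P := {mpoly K[n.+3]}.
Implicit Types (theta g : P).

Lemma actwE k theta g : (msize theta <= k)%N ->
  act theta g = \sum_(m : 'X_{1..n.+3 < k}) theta@_m *: g^`M[m].
Proof.
move=> lt; pose I : subFinType _ := 'X_{1..n.+3 < k}.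
rewrite /act (big_mksub I) //=; first last.
- by move=> x /msize_mdeg_lt /leq_trans; apply.
- by rewrite msupp_uniq.
by rewrite big_rmcond //= => i /memN_msupp_eq0 ->; rewrite scale0r.
Qed.

Definition act_on g theta := act theta g.

Fact act_on_is_linear g : linear (act_on g).
Proof.
move=> a t1 t2; pose k := (msize t1 + msize t2 + msize (a *: t1 + t2))%N.
rewrite /act_on !(@actwE k) /k; try lia.
rewrite scaler_sumr -big_split /=; apply: eq_bigr => m _.
by rewrite mcoeffD mcoeffZ scalerDl scalerA.
Qed.

Fact act_is_linear theta : linear (act theta).
Proof.
move=> a g1 g2; rewrite /act scaler_sumr -big_split /=; apply: eq_bigr => m _.
by rewrite mderivmD mderivmZ scalerDr !scalerA mulrC.
Qed.

End ActLinear.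

HB.instance Definition _ (K : fieldType) n g :=
  GRing.isLinear.Build K {mpoly K[n.+3]} {mpoly K[n.+3]} _ (@act_on K n g)
    (@act_on_is_linear K n g).
HB.instance Definition _ (K : fieldType) n theta :=
  GRing.isLinear.Build K {mpoly K[n.+3]} {mpoly K[n.+3]} _ (@act K n theta)
    (@act_is_linear K n theta).

Section ActAlgebra.
Variables (K : fieldType) (n : nat).
Notation P := {mpoly K[n.+3]}.
Implicit Types (theta g : P).

Lemma act0l g : act 0 g = 0. Proof. exact: (raddf0 (act_on g)). Qed.

Lemma actDl t1 t2 g : act (t1 + t2) g = act t1 g + act t2 g.
Proof. exact: (raddfD (act_on g)). Qed.

Lemma actBl t1 t2 g : act (t1 - t2) g = act t1 g - act t2 g.
Proof. exact: (raddfB (act_on g)). Qed.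

Lemma actZl a theta g : act (a *: theta) g = a *: act theta g.
Proof. by rewrite -[LHS]/(act_on g _) linearZ. Qed.

Lemma act_suml I (r : seq I) (Q : pred I) (F : I -> P) g :
  act (\sum_(i <- r | Q i) F i) g = \sum_(i <- r | Q i) act (F i) g.
Proof. exact: (raddf_sum (act_on g)). Qed.

Lemma actX m g : act 'X_[m] g = g^`M[m].
Proof. by rewrite /act msuppX big_seq1 mcoeffX eqxx scale1r. Qed.

Lemma act_Xmul m b g : act ('X_[m] * b) g = act 'X_[m] (act b g).
Proof.
elim/mpolyind: b => [|c m' b _ _ IH]; first by rewrite mulr0 !act0l raddf0.
rewrite mulrDr !actDl IH linearD /=; congr (_ + _).
by rewrite -scalerAr !actZl linearZ /= -mpolyXD !actX addmC mderivmDm.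
Qed.

Lemma act_mul a b g : act (a * b) g = act a (act b g).
Proof.
elim/mpolyind: a => [|c m a _ _ IH]; first by rewrite mul0r !act0l.
by rewrite mulrDl -scalerAl !actDl !actZl IH act_Xmul.
Qed.

End ActAlgebra.

Section MPolyDeriv.
Variables (K : fieldType) (n : nat) (mf : measure n).
Implicit Types (q : {mpoly K[n]}) (m : 'X_{1..n}).

Lemma dhomog_mderivm e q m :
  q \is e.-homog for mf -> q^`M[m] \is (e - mf m)%N.-homog for mf.
Proof.
move/dhomogP => hq; apply/dhomogP => m'; rewrite mcoeff_msupp mcoeff_mderivm.
move=> nz; have : (m + m')%MM \in msupp q.
  by rewrite mcoeff_msupp; apply: contraNneq nz => ->; rewrite mul0rn.
by move/hq; rewrite mfD => <-; lia.
Qed.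

Lemma mderivm_eq0_homog e q m : q \is e.-homog for mf -> (e < mf m)%N -> q^`M[m] = 0.
Proof.
move/dhomogP => hq lt; apply/mpolyP => m'; rewrite mcoeff_mderivm mcoeff0.
have [/hq|/memN_msupp_eq0 ->] := boolP ((m + m')%MM \in msupp q); last by rewrite mul0rn.
by rewrite mfD; lia.
Qed.

Lemma pihomog0_Xmul m q :
  pihomog mf 0 ('X_[m] * q) = pihomog mf 0 'X_[m] * pihomog mf 0 q.
Proof.
elim/mpolyind: q => [|c m' q _ _ IH]; first by rewrite mulr0 !raddf0 mulr0.
rewrite mulrDr !raddfD /= IH mulrDr; congr (_ + _).
rewrite -scalerAr !linearZ /= -scalerAr -mpolyXD !pihomogX mfD addn_eq0.
by case: eqP; case: eqP; rewrite /= ?mpolyXD ?mul0r ?mulr0.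
Qed.

Lemma pihomog0M q1 q2 :
  pihomog mf 0 (q1 * q2) = pihomog mf 0 q1 * pihomog mf 0 q2.
Proof.
elim/mpolyind: q1 => [|c m q1 _ _ IH]; first by rewrite mul0r raddf0 mul0r.
rewrite mulrDl !raddfD /= IH mulrDl -scalerAl !linearZ /=.
by rewrite (pihomog0_Xmul m q2) -scalerAl.
Qed.

Lemma mnm_splitU m (k : 'I_n) : (0 < m k)%N -> m = (U_(k) + (m - U_(k)))%MM.
Proof.
move=> h; apply/mnmP => k'; rewrite mnmDE mnmBE mnm1E.
by case: eqP => [<-|_] /=; lia.
Qed.

Lemma mderivm_Xmul (k : 'I_n) m q : m k = 0%N -> ('X_k * q)^`M[m] = 'X_k * q^`M[m].
Proof.
elim: {m}(mdeg m).+1 {-2}m (ltnSn (mdeg m)) q => // N IH m lt_m q mk0.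
have [->|nz] := eqVneq m 0%MM; first by rewrite !mderivm0m.
have [j hj] : exists j, (0 < m j)%N.
  apply/existsP; apply: contraR nz => /existsPn m0; apply/eqP/mnmP => j.
  by rewrite mnm0E; have := m0 j; rewrite lt0n negbK => /eqP.
have ne_kj : k != j by apply: contraTneq hj => <-; rewrite mk0.
rewrite (mnm_splitU hj) !mderivmDm !mderivmU1m mderivM mderivX mnm1E.
case: eqP => [E|_]; first by rewrite E eqxx in ne_kj.
rewrite scale0r mul0r add0r IH //; last by rewrite mnmBE mk0.
by have := mdegD U_(j) (m - U_(j)); rewrite -(mnm_splitU hj) mdeg1; lia.
Qed.

End MPolyDeriv.

(* The degree in x_0, .., x_n: [uvpoly] is the subring K[u,v] (or K[U,V]) and
   [uvpart] the projection onto it. *)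
Definition xdeg n (m : 'X_{1..n.+3}) : nat := (\sum_(k < n.+3 | (k <= n)%N) m k)%N.

Fact xdeg0 n : @xdeg n 0%MM = 0%N.
Proof. by rewrite /xdeg big1 // => k _; rewrite mnm0E. Qed.

Fact xdegD n : {morph @xdeg n : m1 m2 / (m1 + m2)%MM >-> (m1 + m2)%N}.
Proof. by move=> m1 m2; rewrite /xdeg -big_split; apply: eq_bigr => k _; rewrite mnmDE. Qed.

HB.instance Definition _ n := isMeasure.Build n.+3 (@xdeg n) (@xdeg0 n) (@xdegD n).

Notation uvpoly := (0.-homog for (@xdeg _)).
Notation uvpart := (pihomog (@xdeg _) 0).

Section UVPart.
Variables (K : fieldType) (n : nat).
Notation P := {mpoly K[n.+3]}.
Implicit Types (m : 'X_{1..n.+3}) (q theta phi : P).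

Lemma xdeg_ge m (k : 'I_n.+3) : (k <= n)%N -> (m k <= xdeg m)%N.
Proof. by move=> hk; rewrite /xdeg (bigD1 k) //= leq_addr. Qed.

Lemma xdeg_eq0 m : (xdeg m == 0%N) = [forall k : 'I_n.+3, (k <= n)%N ==> (m k == 0%N)].
Proof.
apply/eqP/forallP => [hm k|hm]; first by apply/implyP => hk; have := xdeg_ge m hk; lia.
by rewrite /xdeg big1 // => k hk; have /implyP/(_ hk)/eqP := hm k.
Qed.

Lemma xdegU (k : 'I_n.+3) : xdeg U_(k) = (k <= n)%N.
Proof.
rewrite /xdeg; have [hk|hk] := boolP (k <= n)%N.
  rewrite (bigD1 k) //= mnm1E eqxx big1 // => k' /andP[_ h].
  by rewrite mnm1E eq_sym (negbTE h).
by rewrite big1 // => k' hk'; rewrite mnm1E; case: eqP => // E; rewrite E hk' in hk.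
Qed.

Lemma in_Kuv_uvpoly q : in_Kuv q -> q \is uvpoly.
Proof.
move=> hq; apply/dhomogP => m /hq hm.
by apply/eqP; rewrite xdeg_eq0; apply/forallP => k; apply/implyP => /hm ->.
Qed.

Lemma sub_uvpartE q : q - uvpart q = \sum_(m <- msupp q | xdeg m != 0%N) q@_m *: 'X_[m].
Proof.
by rewrite {1}[q]mpolyE (bigID (fun m => xdeg m == 0%N)) /= pihomogE addrAC subrr add0r.
Qed.

Lemma uvpart_homog e q : q \is e.-homog -> uvpart q \is e.-homog.
Proof.
move=> hq; rewrite pihomogE big_seq_cond; apply: rpred_sum => m /andP[hm _].
by apply: rpredZ; rewrite dhomogX /= (dhomog_mf hq hm).
Qed.

Lemma act_uvpart theta q : q \is uvpoly -> act (uvpart theta) q = act theta q.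
Proof.
move=> hq; apply/eqP; rewrite eq_sym -subr_eq0 -actBl sub_uvpartE act_suml /=.
by rewrite big1 // => m hm; rewrite actZl actX (mderivm_eq0_homog hq) ?scaler0 // lt0n.
Qed.

Lemma act_uvpoly_homog theta t q e : theta \is t.-homog ->
  q \is uvpoly -> q \is e.-homog ->
  act theta q \is uvpoly /\ act theta q \is (e - t)%N.-homog.
Proof.
move=> ht hq he; rewrite /act big_seq; split; apply: rpred_sum => m hm; apply: rpredZ.
  by have := dhomog_mderivm m hq; rewrite sub0n.
by have := dhomog_mderivm m he; rewrite /= (dhomog_mf ht hm).
Qed.

Lemma mderiv_uvpoly q (k : 'I_n.+3) : q \is uvpoly -> (k <= n)%N -> mderiv k q = 0.
Proof.
move=> hq hk; rewrite -mderivmU1m (mderivm_eq0_homog hq) //.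
by change (0 < xdeg U_(k))%N; rewrite xdegU hk.
Qed.

Lemma act_uvpoly_Xmul phi (k : 'I_n.+3) q : phi \is uvpoly -> (k <= n)%N ->
  act phi ('X_k * q) = 'X_k * act phi q.
Proof.
move=> hphi hk; rewrite /act mulr_sumr !big_seq; apply: eq_bigr => m hm.
rewrite mderivm_Xmul ?scalerAr //.
by have := xdeg_ge m hk; rewrite (dhomog_mf hphi hm); lia.
Qed.

Lemma xdeg_neq0P m : xdeg m != 0%N ->
  exists i : 'I_n.+1, exists m', m = (U_(inord i) + m')%MM.
Proof.
rewrite xdeg_eq0 => /forallPn [k]; rewrite negb_imply => /andP[hk nz].
exists (Ordinal (hk : (k < n.+1)%N)), (m - U_(k))%MM.
have -> : (inord (Ordinal (hk : (k < n.+1)%N)) : 'I_n.+3) = k.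
  by apply/val_inj; rewrite /= inordK //; lia.
by apply: mnm_splitU; rewrite lt0n.
Qed.

Lemma inord_xK (i : 'I_n.+1) : nat_of_ord (inord i : 'I_n.+3) = i.
Proof. by rewrite inordK //; have := ltn_ord i; lia. Qed.

End UVPart.

Section UVMonomials.
Variables (K : fieldType) (n : nat).
Notation P := {mpoly K[n.+3]}.
Implicit Types (m : 'X_{1..n.+3}) (q : P).

Definition iu : 'I_n.+3 := Ordinal (leqnSn n.+2).
Definition iv : 'I_n.+3 := Ordinal (ltnSn n.+2).

Definition uvmono e a : 'X_{1..n.+3} := (U_(iu) *+ a + U_(iv) *+ (e - a))%MM.

Lemma uvmonoE e a (k : 'I_n.+3) :
  uvmono e a k = if val k == n.+1 then a else if val k == n.+2 then (e - a)%N else 0%N.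
Proof.
rewrite /uvmono mnmDE !mulmnE !mnm1E -!val_eqE /= ![_ == val k]eq_sym.
by case: (val k =P n.+1) => [->|_] /=; [|case: (val k == n.+2)]; lia.
Qed.

Lemma xdeg_uvmono e a : xdeg (uvmono e a) = 0%N.
Proof.
apply/eqP; rewrite xdeg_eq0; apply/forallP => k; apply/implyP => hk.
rewrite uvmonoE; move: hk; change (nat_of_ord k) with (val k).
by case: (val k =P n.+1) => [->|_]; [|case: (val k =P n.+2) => [->|_]]; lia.
Qed.

Lemma mdeg_uvmono e a : (a <= e)%N -> mdeg (uvmono e a) = e.
Proof. by move=> h; rewrite /uvmono mdegD !mdegMn !mdeg1; lia. Qed.

Lemma uvmono_iu e a : uvmono e a iu = a.
Proof. by rewrite uvmonoE eqxx. Qed.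

Lemma uvmonoP e m : xdeg m = 0%N -> mdeg m = e -> (m iu <= e)%N /\ m = uvmono e (m iu).
Proof.
move=> hx hd.
have m0 (k : 'I_n.+3) : (k <= n)%N -> m k = 0%N.
  by move=> hk; have := xdeg_ge m hk; rewrite hx; lia.
have huv : mdeg m = (m iu + m iv)%N.
  rewrite mdegE (bigD1 iu) //= (bigD1 iv) //; last by rewrite -val_eqE /=; lia.
  rewrite big1 => [|k /andP[h1 h2]]; first by rewrite /= addn0.
  by apply: m0; move: (ltn_ord k) h1 h2; rewrite -!val_eqE /=; lia.
split; first lia.
apply/mnmP => k; rewrite uvmonoE.
case: (val k =P n.+1) => [E|h1]; first by congr (m _); apply/val_inj.
case: (val k =P n.+2) => [E|h2]; first by rewrite (_ : k = iv); [lia | apply/val_inj].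
by apply: m0; case: k h1 h2 => k' hk' /= h1 h2; lia.
Qed.

Lemma uvpoly_span e q : q \is uvpoly -> q \is e.-homog ->
  q = \sum_(a < e.+1) q@_(uvmono e a) *: 'X_[uvmono e a].
Proof.
move=> hq he; apply/mpolyP => m; rewrite raddf_sum /=.
under eq_bigr => a _ do rewrite mcoeffZ mcoeffX.
have [hm|hm] := boolP (m \in msupp q); last first.
  rewrite memN_msupp_eq0 // big1 // => a _.
  by case: eqP => [->|_]; rewrite ?mulr0 // memN_msupp_eq0 ?mul0r.
have [le_e def_m] := uvmonoP (dhomog_mf hq hm) (dhomog_mf he hm).
have lt_e : (m iu < e.+1)%N by [].
rewrite (bigD1 (Ordinal lt_e)) //= -def_m eqxx mulr1 big1 ?addr0 // => a ne_a.
case: eqP => [def_m'|_]; last by rewrite mulr0.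
by move: ne_a; rewrite -val_eqE /= -def_m' uvmono_iu eqxx.
Qed.

Definition uvpoint (u0 v0 : K) : 'I_n.+3 -> K :=
  fun k => if val k == n.+1 then u0 else if val k == n.+2 then v0 else 0.

Lemma meval_uvmono u0 v0 e a :
  meval (uvpoint u0 v0) ('X_[uvmono e a] : P) = u0 ^+ a * v0 ^+ (e - a).
Proof.
rewrite mevalX (bigD1 iu) //= (bigD1 iv) /=; last by rewrite -val_eqE /=; lia.
rewrite big1 ?mulr1.
  by rewrite !uvmonoE /uvpoint /= eqxx (_ : (n.+2 == n.+1) = false) ?eqxx //; lia.
move=> k /andP[h1 h2]; rewrite uvmonoE /uvpoint.
by move: h1 h2; rewrite -!val_eqE /= => /negbTE -> /negbTE ->; rewrite expr0.
Qed.

End UVMonomials.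

Arguments iu {n}.
Arguments uvmono {n} e a.
Arguments uvpoint {K n} u0 v0.

Section PerazzoForm.
Variables (K : fieldType) (n d : nat).
Variables (p : 'I_n.+1 -> {mpoly K[n.+3]}) (g : {mpoly K[n.+3]}).
Notation P := {mpoly K[n.+3]}.
Implicit Types (m : 'X_{1..n.+3}) (theta phi : P).
Hypothesis p_uv : forall i, p i \is uvpoly.
Hypothesis p_homog : forall i, p i \is d.-1.-homog.
Hypothesis g_uv : g \is uvpoly.
Hypothesis g_homog : g \is d.-homog.
Hypothesis d_gt0 : (0 < d)%N.

Let f : P := \sum_(i < n.+1) 'X_(inord i) * p i + g.

Lemma f_homog : f \is d.-homog.
Proof.
apply: rpredD g_homog; apply: rpred_sum => i _.
have hX : ('X_(inord i) : P) \is 1.-homog by rewrite dhomogX /= mdeg1.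
by have := dhomogM hX (p_homog i); rewrite add1n prednK.
Qed.

Lemma mderiv_f (i : 'I_n.+1) : mderiv (inord i) f = p i.
Proof.
have hi : ((inord i : 'I_n.+3) <= n)%N by rewrite inord_xK -ltnS.
rewrite mderivD (mderiv_uvpoly g_uv hi) addr0 raddf_sum (bigD1 i) //= big1 ?addr0.
  rewrite mderivM (mderiv_uvpoly (p_uv i) hi) mulr0 addr0 mderivX mnm1E eqxx.
  by rewrite -[X in (X - _)%MM]add0m addmK mpolyX0 scale1r mul1r.
move=> j ne_ji; rewrite mderivM (mderiv_uvpoly (p_uv j) hi) mulr0 addr0 mderivX mnm1E.
case: eqP => [/(congr1 val)|_]; last by rewrite scale0r mul0r.
by rewrite /= !inord_xK => /val_inj eq_ji; rewrite eq_ji eqxx in ne_ji.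
Qed.

Lemma act_xmul_f (i : 'I_n.+1) theta : act ('X_(inord i) * theta) f = act theta (p i).
Proof. by rewrite mulrC act_mul actX mderivmU1m mderiv_f. Qed.

Lemma act_f_eq0 theta j : (d < j)%N -> theta \is j.-homog -> act theta f = 0.
Proof.
move=> lt hj; rewrite /act big_seq big1 // => m hm.
by rewrite (mderivm_eq0_homog f_homog) ?scaler0 //= (dhomog_mf hj hm).
Qed.

Lemma act_uvpoly_f phi : phi \is uvpoly -> (forall i, act phi (p i) = 0) ->
  act phi f = act phi g.
Proof.
move=> hphi phi_p; rewrite linearD raddf_sum /= big1 ?add0r // => i _.
by rewrite act_uvpoly_Xmul ?phi_p ?mulr0 // inord_xK -ltnS.
Qed.

Lemma act_xmono_f m : xdeg m != 0%N ->
  act 'X_[m] f \is uvpoly /\ act 'X_[m] f \is (d - mdeg m)%N.-homog.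
Proof.
move=> /xdeg_neq0P [i [m' ->]]; rewrite actX mderivmDm mderivmU1m mderiv_f.
split; first by have := dhomog_mderivm m' (p_uv i); rewrite sub0n.
rewrite mdegD mdeg1 (_ : (d - _)%N = (d.-1 - mdeg m')%N); last by lia.
exact: dhomog_mderivm.
Qed.

Lemma act_sub_uvpart_f theta e : theta \is e.-homog ->
  act (theta - uvpart theta) f \is uvpoly /\
  act (theta - uvpart theta) f \is (d - e)%N.-homog.
Proof.
move=> he; rewrite sub_uvpartE act_suml big_seq_cond.
split; apply: rpred_sum => m /andP[hm hx]; rewrite actZl; apply: rpredZ.
  exact: (act_xmono_f hx).1.
by rewrite -(dhomog_mf he hm); exact: (act_xmono_f hx).2.
Qed.

Lemma hdim_eq0 j k : (d < j)%N -> hdim f j k -> k = 0%N.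
Proof.
case: k => // k lt_dj [b [hb free _]].
suff /(free (fun _ => 1))/(_ ord0)/eqP : annih f (\sum_r 1 *: b r) by rewrite oner_eq0.
rewrite /annih (act_f_eq0 lt_dj) //.
by apply: rpred_sum => r _; rewrite scale1r hb.
Qed.

Lemma hdim_mul_inj_leq l i k : (i < d)%N -> l \is 1.-homog -> mul_inj f l i ->
  hdim f i k -> (k <= d.+1)%N.
Proof.
move=> lt_id hl l_inj [b [hb free _]].
pose xpart r := act (b r - uvpart (b r)) f.
have xpartP r : act l (xpart r) \is uvpoly /\ act l (xpart r) \is (d - i.+1)%N.-homog.
  have [hu hh] := act_sub_uvpart_f (hb r).
  by have := act_uvpoly_homog hl hu hh; rewrite -subnDA addn1.
pose B r : P * P := (act l (xpart r), uvpart (b r)).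
suff : (k <= (d - i.+1).+1 + i.+1)%N by lia.
apply: (@free_span2_leq _ (P * P)%type _ _ _ B
  (fun a : 'I_(d - i.+1).+1 => ('X_[uvmono (d - i.+1) a], 0))
  (fun a : 'I_i.+1 => (0, 'X_[uvmono i a]))).
  move=> c; rewrite sum_scale_pair => -[x0 uv0].
  apply: free; apply: l_inj; first by apply: rpred_sum => r _; rewrite rpredZ ?hb.
  have -> : \sum_r c r *: b r = \sum_r c r *: (b r - uvpart (b r)).
    by rewrite -[LHS]subr0 -[X in _ - X]uv0 -sumrB; apply: eq_bigr => r _; rewrite scalerBr.
  rewrite /annih act_mul act_suml linear_sum -[RHS]x0; apply: eq_bigr => r _.
  by rewrite actZl linearZ.
move=> r; have [hu hh] := xpartP r.
exists (fun a => (act l (xpart r))@_(uvmono (d - i.+1) a)).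
exists (fun a => (uvpart (b r))@_(uvmono i a)).
have sum_scale0 N (e : 'I_N -> K) : \sum_a e a *: (0 : P) = 0.
  by rewrite big1 // => a _; rewrite scaler0.
rewrite !sum_scale_pair !sum_scale0 -(uvpoly_span hu hh).
rewrite -(uvpoly_span (pihomogP _ _ _) (uvpart_homog (hb r))).
by apply: injective_projections; rewrite /= ?addr0 ?add0r.
Qed.

Definition uv_annihilator j := exists2 phi : P,
  [/\ phi \is uvpoly, phi \is j.-homog & phi != 0] & forall i, act phi (p i) = 0.

Lemma uv_annihilator_leq j j' : (j <= j')%N -> uv_annihilator j -> uv_annihilator j'.
Proof.
move=> le_jj' [phi [uv_phi hphi phi_nz] phi_p].
have uv_u : ('X_iu : P) \is uvpoly by rewrite dhomogX /= xdegU /= ltnn.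
have h_u : ('X_iu : P) \is 1.-homog by rewrite dhomogX /= mdeg1.
exists ('X_iu ^+ (j' - j) * phi); last by move=> i; rewrite act_mul phi_p raddf0.
split.
- by have := dhomogM (dhomogMn (j' - j) uv_u) uv_phi; rewrite mul0n.
- by have := dhomogM (dhomogMn (j' - j) h_u) hphi; rewrite mul1n subnK.
- by rewrite mulf_neq0 // expf_neq0 // -msupp_eq0 msuppX.
Qed.

Lemma hdim_uv_annihilator_leq j k : (j <= d)%N -> uv_annihilator j ->
  hdim f j k -> (k <= d.+1)%N.
Proof.
move=> le_jd [phi [uv_phi hphi phi_nz] phi_p] [b [hb free _]].
have [a0 phi_a0] : exists a0 : 'I_j.+1, phi@_(uvmono j a0) != 0.
  apply/existsP; apply: contraNT phi_nz => /existsPn phi0.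
  rewrite (uvpoly_span uv_phi hphi) big1 // => a _.
  by move: (phi0 a); rewrite negbK => /eqP ->; rewrite scale0r.
suff : (k <= (d - j).+1 + j)%N by lia.
apply: (@free_span2_leq _ _ _ _ _ (fun r => act (b r) f)
  (fun a : 'I_(d - j).+1 => 'X_[uvmono (d - j) a])
  (fun r : 'I_j => act 'X_[uvmono j (lift a0 r)] f)).
  move=> c hc; apply: free.
  by rewrite /annih act_suml -[RHS]hc; apply: eq_bigr => r _; rewrite actZl.
move=> r; have [c [e uv_b]] := @span_exchange _ P j (fun a => 'X_[uvmono j a])
  (fun a => phi@_(uvmono j a)) (fun a => (uvpart (b r))@_(uvmono j a)) a0 phi_a0.
rewrite -(uvpoly_span uv_phi hphi) in uv_b.
rewrite -(uvpoly_span (pihomogP _ _ _) (uvpart_homog (hb r))) in uv_b.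
pose B := act (b r - uvpart (b r)) f + c *: act phi g.
have [uv_B h_B] : B \is uvpoly /\ B \is (d - j)%N.-homog.
  have [h1 h2] := act_sub_uvpart_f (hb r).
  have [h3 h4] := act_uvpoly_homog hphi g_uv g_homog.
  by split; apply: rpredD => //; apply: rpredZ.
exists (fun a => B@_(uvmono (d - j) a)), e; rewrite -(uvpoly_span uv_B h_B).
rewrite -{1}(subrK (uvpart (b r)) (b r)) actDl {2}uv_b [act (c *: _ + _) _]actDl actZl.
rewrite (act_uvpoly_f uv_phi phi_p) act_suml addrA; congr (_ + _).
by apply: eq_bigr => r0 _; rewrite actZl.
Qed.

Lemma mul_surj_uv_annihilator l i : l \is 1.-homog -> mul_surj f l i ->
  uv_annihilator i.+1.
Proof.
move=> hl l_surj.
pose al := (uvpart l)@_(uvmono 1 1); pose be := (uvpart l)@_(uvmono 1 0).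
have uv_l : uvpart l = be *: 'X_[uvmono 1 0] + al *: 'X_[uvmono 1 1].
  rewrite {1}(uvpoly_span (pihomogP _ _ _) (uvpart_homog hl)).
  by rewrite !big_ord_recr big_ord0 /= add0r.
have [u0 [v0 [root nz]]] := linear_form_root al be.
have [a [le_a eta_nz]] : exists a, (a <= i.+1)%N /\ u0 ^+ a * v0 ^+ (i.+1 - a) != 0.
  case/orP: nz => [u_nz|v_nz]; [exists i.+1 | exists 0%N];
    by rewrite ?subnn ?subn0 expr0 ?mulr1 ?mul1r expf_neq0.
pose eta : P := 'X_[uvmono i.+1 a].
have uv_eta : eta \is uvpoly by rewrite dhomogX /= xdeg_uvmono.
have h_eta : eta \is i.+1.-homog by rewrite dhomogX /= mdeg_uvmono.
have [theta [h_theta ann]] := l_surj eta h_eta.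
exists (eta - uvpart l * uvpart theta).
  split.
  - apply: rpredB uv_eta _.
    by have := dhomogM (pihomogP _ 0 l) (pihomogP _ 0 theta); rewrite addn0.
  - apply: rpredB h_eta _.
    by have := dhomogM (uvpart_homog hl) (uvpart_homog h_theta); rewrite add1n.
  - apply: contraNneq eta_nz => /(congr1 (meval (uvpoint u0 v0)))/eqP.
    rewrite mevalB mevalM uv_l mevalD !mevalZ !meval_uvmono !expr0 !expr1 !mulr1 !mul1r.
    by rewrite root mul0r subr0 raddf0.
move=> s; have -> : eta - uvpart l * uvpart theta = uvpart (eta - l * theta).
  by rewrite raddfB /= (pihomog0M _ l theta) (pihomog_dE uv_eta).
by rewrite act_uvpart // -act_xmul_f act_mul ann raddf0.
Qed.

End PerazzoForm.

Theorem proposition4p5 (K : closedFieldType) (Kchar0 : [pchar K] =i pred0)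
  (n d : nat) (f : {mpoly K[n.+3]}) :
  (2 <= n)%N -> (n.+1 <= d)%N ->
  perazzo_form d f -> has_WLP f ->
  forall i j : nat, hdim f i (d + 2) -> hdim f j (d + 2) -> i = j.
Proof.
move=> _ lt_nd [p [g [hp [g_Kuv g_homog] _ _ ->]]] [l [hl wlp]].
have p_uv i := in_Kuv_uvpoly (hp i).1.
have p_homog i := (hp i).2.
have g_uv := in_Kuv_uvpoly g_Kuv.
have d_gt0 : (0 < d)%N by lia.
set F := \sum_(i < n.+1) _ + g.
suff no_lt i j : (i < j)%N -> hdim F i (d + 2) -> hdim F j (d + 2) -> False.
  move=> i j hi hj; case: (ltngtP i j) => // lt_ij.
    by case: (no_lt i j).
  by case: (no_lt j i).
move=> lt_ij hi hj.
have le_jd : (j <= d)%N.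
  by case: leqP => // lt_dj; have := hdim_eq0 p_homog g_homog d_gt0 lt_dj hj; lia.
case: (wlp i) => [l_inj | l_surj].
  have lt_id := leq_trans lt_ij le_jd.
  by have := hdim_mul_inj_leq p_uv p_homog g_uv g_homog d_gt0 lt_id hl l_inj hi; lia.
have ann_j := uv_annihilator_leq lt_ij (mul_surj_uv_annihilator p_uv g_uv hl l_surj).
by have := hdim_uv_annihilator_leq p_uv p_homog g_uv g_homog d_gt0 le_jd ann_j hj; lia.
Qed.
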